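(* Let $R$ be a ring. Let $P$ be a polygon divided into subpolygons $P^1$ and $P^2$ by the dissection $\{(t,v),(v,t)\}$; let $V^\alpha$ be the vertex set of $P^\alpha$ and $U^\alpha=V^\alpha\setminus\{t,v\}$. Let $D^2$ be a dissection of $P^2$ and $D=\{(t,v),(v,t)\}\,\dot\cup\,D^2$. Let $c:\operatorname{diag}P\to R$ be a map with $c_{rs}\in R^*$ for all $(r,s)\in D$. Assume that $c|_{\operatorname{diag}P^2}$ satisfies the $T$-path formula with respect to $D^2$ (i.e. $c_{ik}=\sum_{p\in\mathscr{P}(D^2,i,k)}c_p$ for all distinct vertices $i,k$ of $P^2$, with $T$-paths taken in $P^2$), and that $c$ is a weak frieze with respect to $\{(t,v),(v,t)\}$. Then for all $i\in U^1$ and $k\in U^2$, \[ c_{ik}=\sum_{p\in\mathscr{P}(D,i,k)}c_p. \]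
   Context: $R^*$ denotes the invertible elements of $R$. A polygon is a finite set of at least three vertices with a cyclic ordering, thought of as a convex polygon in the plane; a subpolygon is a subset of at least three vertices with induced cyclic ordering. $\operatorname{diag}P$ is the set of ordered pairs of distinct vertices; internal diagonals are those whose endpoints are not neighbours. $(i,k)$ and $(j,\ell)$ cross if $i,j,k,\ell$ are pairwise distinct with $i<j<k<\ell$ or $i<\ell<k<j$ cyclically. A dissection is a set of internal diagonals closed under reversal with no two crossing; the pair $\{(t,v),(v,t)\}$ divides $P$ into the subpolygons $P^1,P^2$ whose vertex sets are the vertices on either side of $(t,v)$ together with $t,v$. Write $c_{ik}=c(i,k)$, $c_{xx}=0$. A map $c$ is a weak frieze with respect to a dissection $E$ if $c_{rs}\in R^*$ for $(r,s)\in E$ and whenever $(i,k)$ crosses $(r,s)$ with $(r,s),(s,r)\in E$, $c_{ik}=c_{ir}c_{sr}^{-1}c_{sk}+c_{is}c_{rs}^{-1}c_{rk}$. For a polygon $Q$ with dissection $D$, a sequence $(p_1,\ldots,p_\pi)$ of vertices of $Q$ is a $T$-path from $p_1$ to $p_\pi$ with respect to $D$ if: $p_1\ne p_\pi$; the sets $\{p_\alpha,p_{\alpha+1}\}$ are pairwise different 2-element sets; no $(p_\alpha,p_{\alpha+1})$ crosses a diagonal of $D$; each $(p_{2\alpha},p_{2\alpha+1})$ is in $D$ and crosses $(p_1,p_\pi)$, with crossing points progressing monotonically from $p_1$ to $p_\pi$. $\mathscr{P}(D,i,k)$ is the set of such $T$-paths from $i$ to $k$, and $c_p=c_{p_1p_2}c_{p_3p_2}^{-1}c_{p_3p_4}\cdots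 c_{p_{\pi-1}p_{\pi-2}}^{-1}c_{p_{\pi-1}p_\pi}$. *)

From mathcomp Require Import all_boot all_algebra.
Set Implicit Arguments. Unset Strict Implicit. Unset Printing Implicit Defensive.
Import GRing.Theory.

Section Polygon.
Variable n : nat.
(* The polygon P has vertex set 'I_n with the cyclic order 0 < 1 < ... < n-1 < 0. *)
Implicit Types (a b x y z i k : 'I_n) (V : {set 'I_n}) (D E : {set 'I_n * 'I_n}).

(* b lies strictly between a and c when going cyclically forward from a to c *)
Definition cyc a b c : bool :=
  [|| (a < b < c)%N, (b < c < a)%N | (c < a < b)%N].

(* (i,k) and (j,l) cross: pairwise distinct and i<j<k<l or i<l<k<j cyclically *)
Definition cross i k j l : bool :=
  uniq [:: i; k; j; l] && (cyc i j k != cyc i l k).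

(* neighbours in the subpolygon with vertex set V (induced cyclic order) *)
Definition neighbours V x y : bool :=
  [&& x \in V, y \in V, x != y &
      [forall z in V, ~~ cyc x z y] || [forall z in V, ~~ cyc y z x]].

Definition internal_diag V (d : 'I_n * 'I_n) : bool :=
  [&& d.1 \in V, d.2 \in V, d.1 != d.2 & ~~ neighbours V d.1 d.2].

Definition dissection V D : Prop :=
  [/\ forall d, d \in D -> internal_diag V d,
      forall d, d \in D -> (d.2, d.1) \in D &
      forall d e, d \in D -> e \in D -> ~~ cross d.1 d.2 e.1 e.2].

Definition weak_frieze (R : unitRingType) (c : 'I_n -> 'I_n -> R) E : Prop :=
  (forall rs, rs \in E -> c rs.1 rs.2 \is a GRing.unit) /\
  (forall i k r s, (r, s) \in E -> (s, r) \in E -> cross i k r s ->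
     c i k = (c i r * (c s r)^-1 * c s k + c i s * (c r s)^-1 * c r k)%R).

(* x lies strictly on the same side of the diagonal (a,b) as i *)
Definition strict_side a b i x : bool :=
  [&& x != a, x != b & cyc a x b == cyc a i b].

(* For two non-crossing diagonals d, e both crossing a diagonal starting at i:
   the crossing point of d comes strictly before that of e (seen from i) *)
Definition before i (d e : 'I_n * 'I_n) : bool :=
  [&& ~~ strict_side d.1 d.2 i e.1, ~~ strict_side d.1 d.2 i e.2,
      e != d & e != (d.2, d.1)].

Definition steps (s : seq 'I_n) : seq ('I_n * 'I_n) := zip s (behead s).

(* s = (p_1,...,p_pi) is a T-path from i to k in the (sub)polygon V w.r.t. D.
   0-based step index j corresponds to the 1-based step alpha = j+1, so the
   steps (p_(2a), p_(2a+1)) are those with odd j. *)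
Definition is_tpath V D i k (s : seq 'I_n) : bool :=
  let st := steps s in
  [&& (2 <= size s)%N, nth i s 0 == i, last i s == k, i != k,
      all (fun x => x \in V) s,
      all (fun e => e.1 != e.2) st,
      uniq [seq [set e.1; e.2] | e <- st],
      all (fun e => [forall d in D, ~~ cross e.1 e.2 d.1 d.2]) st,
      all (fun j => odd j ==> ((nth (i, i) st j \in D) &&
                               cross i k (nth (i, i) st j).1 (nth (i, i) st j).2))
          (iota 0 (size st)) &
      all (fun j1 => all (fun j2 =>
             [&& odd j1, odd j2 & (j1 < j2)%N] ==>
               before i (nth (i, i) st j1) (nth (i, i) st j2))
           (iota 0 (size st))) (iota 0 (size st))].

(* c_p = c_{p1p2} c_{p3p2}^-1 c_{p3p4} ... c_{p(pi-1)p(pi-2)}^-1 c_{p(pi-1)p(pi)} *)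
Fixpoint tweight (R : unitRingType) (c : 'I_n -> 'I_n -> R) (s : seq 'I_n) : R :=
  match s with
  | a :: b :: ((d :: _) as rest) => (c a b * (c d b)^-1 * tweight c rest)%R
  | [:: a; b] => c a b
  | _ => 0%R
  end.

(* Bound on the length of T-paths: their steps are pairwise different
   2-element subsets of an n-element set, so they have < n*n + 2 vertices. *)
Definition tpath_bound : nat := (n * n).+2.

Definition tsum (R : unitRingType) V D (c : 'I_n -> 'I_n -> R) i k : R :=
  (\sum_(m < tpath_bound) \sum_(p : m.-tuple 'I_n | is_tpath V D i k p)
      tweight c p)%R.

Definition V2 t v : {set 'I_n} := [set x | [|| x == t, x == v | cyc t x v]].
Definition V1 t v : {set 'I_n} := [set x | [|| x == t, x == v | cyc v x t]].
Definition U1 t v : {set 'I_n} := V1 t v :\: [set t; v].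
Definition U2 t v : {set 'I_n} := V2 t v :\: [set t; v].

End Polygon.

From mathcomp Require Import all_boot all_algebra.
From mathcomp Require Import zify.
Import GRing.Theory.
Set Implicit Arguments. Unset Strict Implicit. Unset Printing Implicit Defensive.

(* The first step (i, p_2) of a T-path from i in U^1 to k in U^2 does not
   cross (t, v), while p_2 lies in P^2 (it is k or an endpoint of a diagonal
   of D); hence p_2 is t or v.  Fix a in {t, v} and let b be the other one.  The T-paths starting with i, a
   correspond bijectively to the T-paths in P^2 from b to k with respect
   to D^2, via
       i, a, b, p_4, ...  |->  b, p_4, ...
       i, a, q, ...       |->  b, a, q, ...      (q <> b),
   and the weight of the first is c_ia c_ba^-1 times that of the second.
   The crossing conditions carry over because i and b lie on the same side
   of every diagonal of P^2 that avoids b.  Summing over a and using the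
   T-path formula in P^2 turns the T-path sum for (i, k) into
   c_it c_vt^-1 c_vk + c_iv c_tv^-1 c_tk, which is c_ik by the weak frieze
   relation for the crossing diagonals (i, k) and (t, v). *)

Section Odds.
Variable T : Type.
Implicit Types (s : seq T) (P : pred T) (r : rel T).

Fixpoint odds s : seq T := if s is _ :: y :: s' then y :: odds s' else [::].

Lemma iota0_addn2 m : iota 0 m.+2 = [:: 0, 1 & map (addn 2) (iota 0 m)].
Proof. by rewrite -iotaDl. Qed.

Lemma all_odds x0 P s :
  all (fun j => odd j ==> P (nth x0 s j)) (iota 0 (size s)) = all P (odds s).
Proof.
have [m] := ubnP (size s); elim: m s => // m IH [|x [|y s]] // lt_s.
have {}lt_s : size s < m by move: lt_s => /=; lia.
rewrite [size _]/= iota0_addn2 /= all_map -IH //; congr (_ && _).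
by apply: eq_all => j /=; rewrite add0n negbK.
Qed.

Lemma pairwise_odds x0 r s :
  all (fun j1 => all (fun j2 => [&& odd j1, odd j2 & j1 < j2] ==>
      r (nth x0 s j1) (nth x0 s j2)) (iota 0 (size s))) (iota 0 (size s))
  = pairwise r (odds s).
Proof.
have [m] := ubnP (size s); elim: m s => // m IH [|x [|y s]] // lt_s.
have {}lt_s : size s < m by move: lt_s => /=; lia.
rewrite [size _]/= iota0_addn2 /= !all_map -(all_odds x0) -IH //.
rewrite all_predT /=; congr (_ && _); apply: eq_all => j /=; rewrite add0n negbK.
  by rewrite andbT.
by rewrite andbF /= all_map; apply: eq_all => j2 /=; rewrite add0n negbK ltn_add2l.
Qed.
End Odds.

Lemma big_uniq_bij (R : Type) (idx : R) (op : Monoid.com_law idx) (I : eqType)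
    (r : seq I) (P Q : pred I) (f g : I -> I) (F : I -> R) :
  uniq r -> {subset P <= r} -> {subset Q <= r} ->
  (forall x, P x -> Q (f x)) -> (forall y, Q y -> P (g y)) ->
  (forall x, P x -> g (f x) = x) -> (forall y, Q y -> f (g y) = y) ->
  \big[op/idx]_(x <- r | P x) F (f x) = \big[op/idx]_(y <- r | Q y) F y.
Proof.
move=> r_uniq Pr Qr PQ QP gK fK.
rewrite -big_filter -[RHS]big_filter -(big_map f xpredT); apply: perm_big.
apply: uniq_perm; rewrite ?filter_uniq //.
  rewrite map_inj_in_uniq ?filter_uniq // => x y.
  by rewrite !mem_filter => /andP[Px _] /andP[Py _] fxy; rewrite -(gK x) // fxy gK.
move=> y; rewrite mem_filter; apply/mapP/andP => [[x]|[Qy _]].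
  by rewrite mem_filter => /andP[/PQ Qfx _] ->; rewrite Qfx Qr.
have Pgy := QP y Qy.
by exists (g y); rewrite ?fK // mem_filter Pgy (Pr _ Pgy).
Qed.

Section Paths.
Variable n : nat.
Implicit Types (i k x y : 'I_n) (r s : seq 'I_n) (d e : 'I_n * 'I_n) (w : seq ('I_n * 'I_n)).
Implicit Types (V : {set 'I_n}) (D : {set 'I_n * 'I_n}).

Definition endpoints e : {set 'I_n} := [set e.1; e.2].

Lemma endpointsC x y : endpoints (x, y) = endpoints (y, x).
Proof. by rewrite /endpoints setUC. Qed.

Definition avoids x e := (e.1 != x) && (e.2 != x).

Lemma steps_cons2 x y s : steps [:: x, y & s] = (x, y) :: steps (y :: s).
Proof. by []. Qed.

Lemma odds_steps_cons x y s : odds (steps (x :: s)) = odds (steps (y :: s)).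
Proof. by case: s. Qed.

Lemma odds_steps_cons3 x y z s :
  odds (steps [:: x, y, z & s]) = (y, z) :: odds (steps (z :: s)).
Proof. by []. Qed.

Lemma mem_steps s e : e \in steps s -> (e.1 \in s) && (e.2 \in s).
Proof.
elim: s => [|x [|y s] IH] //; rewrite steps_cons2 in_cons => /orP[/eqP-> | /IH].
  by rewrite !in_cons !eqxx orbT.
by rewrite !in_cons => /andP[-> ->]; rewrite !orbT.
Qed.

Lemma endpoints_notin x y s :
  x \notin s -> endpoints (x, y) \notin [seq endpoints e | e <- steps s].
Proof.
move=> xs; apply/mapP => -[e /mem_steps/andP[e1 e2] exy].
have : x \in endpoints e by rewrite -exy !inE eqxx.
by rewrite !inE => /orP[] /eqP xe; move: xs; rewrite xe ?e1 ?e2.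
Qed.

Lemma all_behead_odds_steps (P : pred 'I_n) x0 s :
  P (last x0 s) -> all (fun e => P e.1 && P e.2) (odds (steps s)) ->
  all P (behead s).
Proof.
have [m] := ubnP (size s); elim: m s => // m IH [|x [|y [|z s]]] //= lt_s.
  by rewrite andbT.
move=> Plast /andP[/andP[-> ->] Podds] /=.
by apply: (IH (z :: s)) => //; move: lt_s => /=; lia.
Qed.

Definition noncrossing_step D e :=
  (e.1 != e.2) && [forall d in D, ~~ cross e.1 e.2 d.1 d.2].

Definition ordered_crossings D i k w :=
  all (fun e => (e \in D) && cross i k e.1 e.2) w && pairwise (before i) w.

(* For s = (p_1, ..., p_pi), [odds (steps s)] is the list of the steps
   (p_2, p_3), (p_4, p_5), ... that a T-path must take along diagonals of D. *)
Definition tpath_seq V D i k s :=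
  [&& 2 <= size s, head i s == i, last i s == k, i != k,
      all (fun x => x \in V) s,
      uniq [seq endpoints e | e <- steps s],
      all (noncrossing_step D) (steps s) &
      ordered_crossings D i k (odds (steps s))].

Lemma is_tpathE V D i k s : is_tpath V D i k s = tpath_seq V D i k s.
Proof.
rewrite /is_tpath /tpath_seq /ordered_crossings (all_predI _ _ (steps s)); cbv zeta.
rewrite (all_odds (i, i) (fun e => (e \in D) && cross i k e.1 e.2)).
rewrite (pairwise_odds (i, i) (before i)) nth0.
by do 5 congr (_ && _); rewrite andbCA !andbA.
Qed.

Lemma ordered_crossings_cons D i k d w :
  ordered_crossings D i k (d :: w) =
  [&& d \in D, cross i k d.1 d.2, all (before i d) w & ordered_crossings D i k w].
Proof.
rewrite /ordered_crossings pairwise_cons [all _ (_ :: _)]/=.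
(* [cross] unfolds to a conjunction, which [rewrite -!andbA] would split. *)
move: (cross i k d.1 d.2) (d \in D) => X Y; rewrite -!andbA.
by congr (_ && (_ && _)); exact: andbCA.
Qed.

Lemma ordered_crossings_sub D i k w : ordered_crossings D i k w -> all (fun e => e \in D) w.
Proof. by case/andP => /allP w_D _; apply/allP => e /w_D /andP[]. Qed.

Lemma tpath_seq_cons2 V D i k x y r :
  tpath_seq V D i k [:: x, y & r] =
  [&& x == i, last y r == k, i != k, all (fun z => z \in V) [:: x, y & r],
      (endpoints (x, y) \notin [seq endpoints e | e <- steps (y :: r)]) &&
        uniq [seq endpoints e | e <- steps (y :: r)],
      noncrossing_step D (x, y) && all (noncrossing_step D) (steps (y :: r)) &
      ordered_crossings D i k (odds (steps [:: x, y & r]))].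
Proof. by rewrite /tpath_seq steps_cons2. Qed.

Lemma tpath_seq_last V D i k s : tpath_seq V D i k s -> last i s = k.
Proof. by case/and4P => _ _ /eqP. Qed.

Lemma tpath_size_bound s :
  uniq [seq endpoints e | e <- steps s] -> size s < tpath_bound n.
Proof.
move=> uniq_ends; suff : (size s).-1 <= n * n by rewrite /tpath_bound; lia.
have -> : (size s).-1 = size [seq endpoints e | e <- steps s].
  by rewrite size_map /steps size_zip size_behead; lia.
have -> : n * n = size [seq endpoints e | e <- [seq (x, y) | x <- enum 'I_n, y <- enum 'I_n]].
  by rewrite size_map size_allpairs size_enum_ord.
apply: uniq_leq_size => // _ /mapP[e _ ->]; apply: map_f.
by case: e => x y; apply: allpairs_f; rewrite mem_enum.
Qed.

Definition short_seqs m : seq (seq 'I_n) :=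
  [seq val p | j <- iota 0 m, p <- enum {: j.-tuple 'I_n}].

Lemma mem_short_seqs m s : (s \in short_seqs m) = (size s < m).
Proof.
apply/allpairsPdep/idP => [[j [p [+ _ ->]]] | lt_s].
  by rewrite mem_iota size_tuple.
by exists (size s), (in_tuple s); rewrite mem_iota mem_enum.
Qed.

Lemma short_seqs_uniq m : uniq (short_seqs m).
Proof.
apply: allpairs_uniq_dep => [|j _|]; rewrite ?iota_uniq ?enum_uniq //.
move=> [j1 p1] [j2 p2] _ _ /= p12.
have j12 : j1 = j2 by rewrite -(size_tuple p1) -(size_tuple p2) p12.
by subst j2; congr Tagged; apply: val_inj.
Qed.

Lemma tsum_short_seqs (R : unitRingType) V D (c : 'I_n -> 'I_n -> R) i k :
  tsum V D c i k =
  (\sum_(s <- short_seqs (tpath_bound n) | is_tpath V D i k s) tweight c s)%R.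
Proof.
rewrite /tsum /short_seqs [RHS]big_mkcond big_allpairs_dep /=.
rewrite -(big_mkord xpredT
  (fun j => \sum_(p : j.-tuple 'I_n | is_tpath V D i k p) tweight c p)%R).
rewrite /index_iota subn0; apply: eq_bigr => j _.
by rewrite big_mkcond big_enum.
Qed.

Lemma tpath_seq_short V D i k s :
  tpath_seq V D i k s -> s \in short_seqs (tpath_bound n).
Proof. by case/and5P => _ _ _ _ /and4P[_ /tpath_size_bound]; rewrite mem_short_seqs. Qed.
End Paths.

Section Geometry.
Variables (n : nat) (t v : 'I_n).
Implicit Types (b i j k l p q x y : 'I_n).

Ltac polygon := rewrite /U1 /U2 /V1 /V2 /cross /strict_side /cyc /= ?inE -?val_eqE /=; lia.

Lemma crossC i k j l : cross i k j l = cross j l i k.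
Proof. polygon. Qed.

Lemma cross_neq i k x y : cross i k x y -> (x != i) && (y != i).
Proof. polygon. Qed.

Lemma tv_V1 b : b \in [set t; v] -> b \in V1 t v.
Proof. rewrite !inE => /orP[] /eqP ->; polygon. Qed.

Lemma tv_V2 b : b \in [set t; v] -> b \in V2 t v.
Proof. rewrite !inE => /orP[] /eqP ->; polygon. Qed.

Lemma U1_notin_V2 x : x \in U1 t v -> x \notin V2 t v.
Proof. polygon. Qed.

Lemma cross_U1_U2 i k : i \in U1 t v -> k \in U2 t v -> cross i k t v && cross i k v t.
Proof. polygon. Qed.

Lemma nocross_V1_V2 p q x y : p \in V1 t v -> q \in V1 t v ->
  x \in V2 t v -> y \in V2 t v -> ~~ cross p q x y.
Proof.
rewrite /V1 !inE => /or3P [/eqP->|/eqP->|+] /or3P [/eqP->|/eqP->|+]; polygon.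
Qed.

Lemma cyc_U1_tv b i x y : b \in [set t; v] -> x \in V2 t v -> y \in V2 t v ->
  x != b -> y != b -> i \in U1 t v -> cyc x b y = cyc x i y.
Proof. rewrite !inE => /orP[] /eqP ->; polygon. Qed.

Lemma cyc_U1_tv_U2 b i k x : b \in [set t; v] -> x \in V2 t v -> x != b ->
  i \in U1 t v -> k \in U2 t v -> cyc b x k = cyc i x k.
Proof. rewrite !inE => /orP[] /eqP ->; polygon. Qed.

Lemma cross_U1_tv b i k x y : b \in [set t; v] ->
  x \in V2 t v -> y \in V2 t v -> x != b -> y != b ->
  i \in U1 t v -> k \in U2 t v -> cross b k x y = cross i k x y.
Proof.
move=> btv xV yV xb yb iU kU; have iV2 := U1_notin_V2 iU.
have kV2 : k \in V2 t v by move: kU; rewrite in_setD => /andP[].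
have kb : k != b by apply: contraTneq kU => ->; rewrite in_setD btv.
have ne_i z : z \in V2 t v -> i != z by move=> zV; apply: contraNneq iV2 => ->.
rewrite /cross (cyc_U1_tv_U2 btv xV xb iU kU) (cyc_U1_tv_U2 btv yV yb iU kU).
rewrite [uniq (b :: _)]/= [uniq (i :: _)]/= !inE !negb_or !ne_i //.
by rewrite eq_sym kb eq_sym xb eq_sym yb.
Qed.

Lemma notside_V2_U1 i x : x \in V2 t v -> i \in U1 t v ->
  ~~ strict_side t v i x && ~~ strict_side v t i x.
Proof. polygon. Qed.

Lemma neighbours_tv : t != v -> neighbours (V2 t v) t v && neighbours (V2 t v) v t.
Proof.
move=> tv; rewrite /neighbours !tv_V2 ?inE ?eqxx ?orbT // tv eq_sym tv /=.
by apply/andP; split; apply/orP; [right|left]; apply/forall_inP => z; polygon.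
Qed.
End Geometry.

Section FirstStep.
Variables (n : nat) (t v : 'I_n) (D2 : {set 'I_n * 'I_n}).
Hypotheses (tv : t != v) (D2_diss : dissection (V2 t v) D2).
Variables (i k : 'I_n).
Hypotheses (iU1 : i \in U1 t v) (kU2 : k \in U2 t v).
Local Notation D := ((t, v) |: ((v, t) |: D2)).
Local Notation P_tpath := (tpath_seq [set: 'I_n] D i k).
Implicit Types (x y q : 'I_n) (r s : seq 'I_n) (d e : 'I_n * 'I_n) (w : seq ('I_n * 'I_n)).

Lemma k_V2 : k \in V2 t v.
Proof. by move: kU2; rewrite in_setD => /andP[]. Qed.

Lemma i_V1 : i \in V1 t v.
Proof. by move: iU1; rewrite in_setD => /andP[]. Qed.

Lemma i_notin_V2 : i \notin V2 t v.
Proof. exact: U1_notin_V2. Qed.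

Lemma i_neq_V2 x : x \in V2 t v -> i != x.
Proof. by move=> xV2; apply: contraNneq i_notin_V2 => ->. Qed.

Lemma tv_neq_k x : x \in [set t; v] -> x != k.
Proof. by move=> xtv; apply: contraTneq kU2 => <-; rewrite in_setD xtv. Qed.

Lemma D2_V2 e : e \in D2 -> [&& e.1 \in V2 t v, e.2 \in V2 t v & e.1 != e.2].
Proof. by case: D2_diss => diag _ _ /diag /and4P[-> -> -> _]. Qed.

Lemma D2_sub_D e : e \in D2 -> e \in D.
Proof. by move=> eD2; rewrite !in_setU1 eD2 !orbT. Qed.

Lemma D_V2 e : e \in D -> (e.1 \in V2 t v) && (e.2 \in V2 t v).
Proof.
rewrite !in_setU1 => /or3P[/eqP-> | /eqP-> | /D2_V2/and3P[-> -> _]] //=;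
  by rewrite !tv_V2 // !inE eqxx ?orbT.
Qed.

Lemma tv_notin_D2 : ((t, v) \notin D2) && ((v, t) \notin D2).
Proof.
case: D2_diss => diag _ _; have /andP[ntv nvt] := neighbours_tv tv.
by apply/andP; split; apply/negP => /diag /and4P[_ _ _]; rewrite /= ?ntv ?nvt.
Qed.

Lemma noncrossing_D_D2 e : noncrossing_step D e -> noncrossing_step D2 e.
Proof.
by rewrite /noncrossing_step => /andP[-> /forall_inP nc]; apply/forall_inP => d /D2_sub_D /nc.
Qed.

Lemma noncrossing_V1 x y : x \in V1 t v -> y \in V1 t v -> x != y ->
  noncrossing_step D (x, y).
Proof.
move=> xV1 yV1 xy; rewrite /noncrossing_step xy; apply/forall_inP => d /D_V2/andP[].
exact: nocross_V1_V2.
Qed.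

Lemma noncrossing_V2 e : e.1 \in V2 t v -> e.2 \in V2 t v ->
  noncrossing_step D2 e -> noncrossing_step D e.
Proof.
rewrite /noncrossing_step => e1 e2 /andP[-> /forall_inP nc]; apply/forall_inP => d.
rewrite !in_setU1 => /or3P[/eqP-> | /eqP-> | /nc //] /=; rewrite crossC;
  by apply: (nocross_V1_V2 (tv_V1 _) (tv_V1 _) e1 e2); rewrite !inE eqxx ?orbT.
Qed.

Lemma path_in_V2 x s : x \in V2 t v -> last x s \in V2 t v ->
  all (fun e => e \in D) (odds (steps (x :: s))) -> all (fun y => y \in V2 t v) (x :: s).
Proof.
move=> xV2 lastV2 oddD; rewrite /= xV2.
apply: (all_behead_odds_steps (P := fun y => y \in V2 t v) (x0 := x) (s := x :: s)) => //.
by apply/allP => e /(allP oddD) /D_V2.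
Qed.

Lemma all_noncrossing_V2 s : all (fun y => y \in V2 t v) s ->
  all (noncrossing_step D2) (steps s) -> all (noncrossing_step D) (steps s).
Proof.
move=> /allP s_V2 /allP nc; apply/allP => e es; have /andP[e1 e2] := mem_steps es.
by apply: noncrossing_V2; rewrite ?s_V2 ?nc.
Qed.

Lemma tpath_second_vertex s :
  P_tpath s -> nth i s 1 \in [set t; v].
Proof.
case: s => [|x [|y r]] //; rewrite tpath_seq_cons2.
case/and5P => /eqP-> last_k _ _ /and3P[_ /andP[nc_iy _] oc] /=; apply: contraT => ytv.
have yV2 : y \in V2 t v.
  case: r last_k oc => [/eqP /= -> _ | q r _]; first exact: k_V2.
  by rewrite odds_steps_cons3 ordered_crossings_cons => /and4P[qD _ _ _]; case/andP: (D_V2 qD).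
have yU2 : y \in U2 t v by rewrite in_setD ytv.
have /andP[cross_iy _] := cross_U1_U2 iU1 yU2.
move: nc_iy => /andP[_ /forall_inP/(_ (t, v))].
by rewrite in_setU1 eqxx cross_iy => /(_ isT).
Qed.

Lemma big_tpath_second_vertex (R : unitRingType) (F : seq 'I_n -> R) L :
  (\sum_(s <- L | P_tpath s) F s =
   \sum_(s <- L | P_tpath s && (nth i s 1 == t)) F s +
   \sum_(s <- L | P_tpath s && (nth i s 1 == v)) F s)%R.
Proof.
rewrite (bigID (fun s => nth i s 1 == t)) /=; congr (_ + _)%R; apply: eq_bigl => s.
case Ps: (tpath_seq _ _ _ _ s) => //=.
by case/set2P: (tpath_second_vertex Ps) => ->; rewrite eqxx ?(negbTE tv) // eq_sym.
Qed.

Variables a b : 'I_n.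
Hypothesis ab_tv : (a, b) = (t, v) \/ (a, b) = (v, t).
Local Notation P2_tpath := (tpath_seq (V2 t v) D2 b k).

Lemma a_tv : a \in [set t; v].
Proof. by case: ab_tv => -[-> _]; rewrite !inE eqxx ?orbT. Qed.

Lemma b_tv : b \in [set t; v].
Proof. by case: ab_tv => -[_ ->]; rewrite !inE eqxx ?orbT. Qed.

Lemma a_neq_b : a != b.
Proof. by case: ab_tv => -[-> ->]; rewrite // eq_sym. Qed.

Lemma D_avoids_D2 e : e \in D -> avoids b e -> e \in D2.
Proof.
rewrite !in_setU1 => /or3P[/eqP-> | /eqP-> | //];
  by case: ab_tv => -[_ ->]; rewrite /avoids /= eqxx ?andbF.
Qed.

Lemma before_U1_tv d e : d.1 \in V2 t v -> d.2 \in V2 t v -> avoids b d ->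
  before i d e = before b d e.
Proof.
move=> d1 d2 /andP[d1b d2b].
by rewrite /before /strict_side (cyc_U1_tv b_tv d1 d2 d1b d2b iU1).
Qed.

Lemma before_avoids d e : d.1 \in V2 t v -> d.2 \in V2 t v -> avoids b d ->
  before i d e -> avoids b e.
Proof.
move=> d1 d2 db; rewrite (before_U1_tv _ d1 d2 db).
have side_b : strict_side d.1 d.2 b b.
  by case/andP: db => d1b d2b; rewrite /strict_side eq_sym d1b eq_sym d2b eqxx.
case/and4P => ne1 ne2 _ _.
by apply/andP; split; [apply: contraNneq ne1 | apply: contraNneq ne2] => ->.
Qed.

Lemma ordered_crossings_avoids d w : d \in D -> avoids b d ->
  ordered_crossings D i k (d :: w) -> all (avoids b) (d :: w).
Proof.
move=> dD db; rewrite ordered_crossings_cons => /and4P[_ _ before_d _] /=; rewrite db.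
have /andP[d1 d2] := D_V2 dD.
by apply/allP => e /(allP before_d); apply: before_avoids.
Qed.

Lemma ordered_crossings_D2_avoids w : ordered_crossings D2 b k w -> all (avoids b) w.
Proof. by case/andP=> /allP w_cross _; apply/allP => e /w_cross/andP[_ /cross_neq]. Qed.

Lemma ordered_crossings_transfer w : all (avoids b) w ->
  ordered_crossings D i k w = ordered_crossings D2 b k w.
Proof.
move=> w_avoids; rewrite /ordered_crossings.
have D_D2 : {in w, forall e,
    (e \in D) && cross i k e.1 e.2 = (e \in D2) && cross b k e.1 e.2}.
  move=> e /(allP w_avoids) eb; case eD: (e \in D); last first.
    by apply/esym/andP => -[/D2_sub_D]; rewrite eD.
  have /andP[e1 e2] := D_V2 eD; case/andP: (eb) => e1b e2b.
  by rewrite D_avoids_D2 // (cross_U1_tv b_tv e1 e2 e1b e2b iU1 kU2).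
rewrite (eq_in_all D_D2); apply: andb_id2l => /allP w_D2.
apply: (eq_in_pairwise (P := fun e => [&& e.1 \in V2 t v, e.2 \in V2 t v & avoids b e])).
  by move=> d e /and3P[d1 d2 db] _; apply: before_U1_tv.
apply/allP => e ew; have /andP[/D2_V2/and3P[-> -> _] _] := w_D2 e ew.
exact: (allP w_avoids).
Qed.

Lemma before_tv e : e \in D2 -> before i (a, b) e.
Proof.
move=> eD2; have /and3P[e1 e2 _] := D2_V2 eD2; have /andP[ntv nvt] := tv_notin_D2.
have /andP[s1 s1'] := notside_V2_U1 e1 iU1; have /andP[s2 s2'] := notside_V2_U1 e2 iU1.
have etv : e != (t, v) by apply: contraNneq ntv => <-.
have evt : e != (v, t) by apply: contraNneq nvt => <-.
by case: ab_tv => -[-> ->]; rewrite /before /= ?s1 ?s2 ?s1' ?s2' etv evt.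
Qed.

Lemma b_notin_tail x s : last x s != b ->
  all (avoids b) (odds (steps (x :: s))) -> b \notin s.
Proof.
move=> lastb oddb; apply/negP => bs.
have := all_behead_odds_steps (P := fun y => y != b) (x0 := x) (s := x :: s) lastb.
by move=> /(_ oddb) /allP /(_ b bs); rewrite eqxx.
Qed.
Lemma ab_D : (a, b) \in D.
Proof. by case: ab_tv => -[-> ->]; rewrite !in_setU1 eqxx ?orbT. Qed.

Lemma cross_ab : cross i k a b.
Proof. by have /andP[? ?] := cross_U1_U2 iU1 kU2; case: ab_tv => -[-> ->]. Qed.

Lemma b_notin_P2_tpath s : P2_tpath (b :: s) -> b \notin s.
Proof.
move=> Qs; have /= last_k := tpath_seq_last Qs.
apply: (b_notin_tail (x := b)); first by rewrite last_k eq_sym tv_neq_k ?b_tv.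
by case/and5P: Qs => _ _ _ _ /and4P[_ _ _ /ordered_crossings_D2_avoids].
Qed.

Lemma ordered_crossings_avoids_head q r :
  uniq [seq endpoints e | e <- steps [:: b, q & r]] ->
  all (noncrossing_step D) (steps [:: b, q & r]) ->
  ordered_crossings D i k (odds (steps [:: b, q & r])) ->
  all (avoids b) (odds (steps [:: b, q & r])).
Proof.
case: r => [|p r]; first by rewrite steps_cons2.
rewrite !steps_cons2 map_cons cons_uniq => /andP[bq_new _] /andP[/andP[bq _] _].
rewrite -steps_cons2 odds_steps_cons3 => oc.
have qpD : (q, p) \in D by move: oc; rewrite ordered_crossings_cons => /and4P[].
apply: ordered_crossings_avoids oc => //; rewrite /avoids /= eq_sym bq /=.
by apply: contraNneq bq_new => ->; rewrite map_cons in_cons endpointsC eqxx.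
Qed.

Lemma tpath_swap_head q r : q != b ->
  P_tpath [:: i, a, q & r] -> P2_tpath [:: b, a, q & r].
Proof.
move=> qb; rewrite !tpath_seq_cons2.
case/and5P => _ last_k _ _ /and3P[/andP[_ uniq_ends] /andP[_ nc_tail] oc].
have last_qr : last q r = k := eqP last_k.
have aqD : (a, q) \in D.
  by move: oc; rewrite odds_steps_cons3 ordered_crossings_cons => /and4P[].
have w_avoids : all (avoids b) (odds (steps [:: i, a, q & r])).
  by apply: ordered_crossings_avoids oc; rewrite // /avoids /= a_neq_b.
have b_tail : b \notin [:: a, q & r].
  by apply: (b_notin_tail (x := i)); rewrite //= last_qr eq_sym tv_neq_k ?b_tv.
rewrite (odds_steps_cons _ i); apply/and5P; split => //; first exact: tv_neq_k b_tv.
  apply: path_in_V2; [exact: tv_V2 b_tv | by rewrite /= last_qr k_V2 |].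
  by rewrite (odds_steps_cons _ i) (ordered_crossings_sub oc).
apply/and3P; split; first by rewrite uniq_ends andbT endpoints_notin.
  apply/andP; split; last by apply: (sub_all _ nc_tail) => e /noncrossing_D_D2.
  by apply/noncrossing_D_D2/noncrossing_V1; rewrite ?tv_V1 ?a_tv ?b_tv // eq_sym a_neq_b.
by rewrite -ordered_crossings_transfer.
Qed.

Lemma tpath_unswap_head q r :
  P2_tpath [:: b, a, q & r] -> P_tpath [:: i, a, q & r].
Proof.
rewrite !tpath_seq_cons2.
case/and5P => _ last_k _ path_V2 /and3P[/andP[_ uniq_ends] /andP[_ nc_tail] oc].
have tail_V2 : all (fun y => y \in V2 t v) [:: a, q & r] by case/andP: path_V2.
apply/and5P; split => //; first exact: i_neq_V2 k_V2.
  by apply/allP => x; rewrite in_setT.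
apply/and3P; split.
- rewrite uniq_ends andbT endpoints_notin //.
  by apply: contra i_notin_V2 => /(allP tail_V2).
- apply/andP; split; last exact: all_noncrossing_V2.
  by apply: noncrossing_V1; rewrite ?i_V1 ?tv_V1 ?a_tv ?i_neq_V2 ?tv_V2 ?a_tv.
- by rewrite (odds_steps_cons _ b) ordered_crossings_transfer ?ordered_crossings_D2_avoids.
Qed.

Lemma tpath_drop_head q r :
  P_tpath [:: i, a, b, q & r] -> P2_tpath [:: b, q & r].
Proof.
rewrite !tpath_seq_cons2.
case/and5P => _ last_k _ _ /and3P[/andP[_ uniq_ends] /andP[_ nc_steps] oc].
have last_qr : last q r = k := eqP last_k.
have {}uniq_ends : uniq [seq endpoints e | e <- steps [:: b, q & r]].
  by move: uniq_ends; rewrite steps_cons2 map_cons cons_uniq => /andP[].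
have {}nc_steps : all (noncrossing_step D) (steps [:: b, q & r]) by case/andP: nc_steps.
have {}oc : ordered_crossings D i k (odds (steps [:: b, q & r])).
  by move: oc; rewrite odds_steps_cons3 ordered_crossings_cons => /and4P[].
apply/and5P; split => //; first exact: tv_neq_k b_tv.
  apply: path_in_V2; [exact: tv_V2 b_tv | by rewrite /= last_qr k_V2 |].
  exact: ordered_crossings_sub oc.
apply/and3P; split.
- by move: uniq_ends; rewrite steps_cons2 map_cons cons_uniq.
- by apply: (sub_all _ nc_steps) => e /noncrossing_D_D2.
- by rewrite -ordered_crossings_transfer ?(ordered_crossings_avoids_head uniq_ends nc_steps).
Qed.

Lemma endpoints_ab_neq q : q != a -> endpoints (a, b) != endpoints (b, q).
Proof.
move=> qa; apply/negP => /eqP ab_bq.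
have : a \in endpoints (b, q) by rewrite -ab_bq !inE eqxx.
by rewrite !inE (negbTE a_neq_b) eq_sym (negbTE qa).
Qed.

Lemma tpath_add_head q r : q != a ->
  P2_tpath [:: b, q & r] -> P_tpath [:: i, a, b, q & r].
Proof.
move=> qa Qs; have b_tail := b_notin_P2_tpath Qs; move: Qs.
rewrite !tpath_seq_cons2 => /and5P[_ last_k _ path_V2].
case/and3P => /andP[bq_new uniq_tail] /andP[nc_bq nc_tail] oc.
have tail_V2 : all (fun y => y \in V2 t v) [:: a, b, q & r] by rewrite /= tv_V2 ?a_tv.
apply/and5P; split => //; first exact: i_neq_V2 k_V2.
  by apply/allP => x; rewrite in_setT.
apply/and3P; split.
- rewrite endpoints_notin; last by apply: contra i_notin_V2 => /(allP tail_V2).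
  rewrite steps_cons2 map_cons cons_uniq steps_cons2 map_cons in_cons negb_or.
  by rewrite endpoints_ab_neq // endpointsC endpoints_notin //= bq_new uniq_tail.
- apply/andP; split.
    by apply: noncrossing_V1; rewrite ?i_V1 ?tv_V1 ?a_tv ?i_neq_V2 ?tv_V2 ?a_tv.
  have nc_D2 : all (noncrossing_step D2) (steps [:: b, q & r]).
    by rewrite steps_cons2; apply/andP.
  rewrite steps_cons2; apply/andP; split; last exact: all_noncrossing_V2 path_V2 nc_D2.
  by apply: noncrossing_V1; rewrite ?tv_V1 ?a_tv ?b_tv ?a_neq_b.
- rewrite odds_steps_cons3 ordered_crossings_cons ab_D cross_ab /=.
  rewrite ordered_crossings_transfer ?ordered_crossings_D2_avoids // oc andbT.
  by apply/allP => e /(allP (ordered_crossings_sub oc)); apply: before_tv.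
Qed.

Definition restrict_tpath s := if nth i s 2 == b then drop 2 s else b :: behead s.
Definition extend_tpath s := if nth i s 1 == a then i :: behead s else [:: i, a & s].

Local Notation P_tpath_via_a s := (P_tpath s && (nth i s 1 == a)).

Lemma P_tpath_shape s : P_tpath_via_a s -> exists q r, s = [:: i, a, q & r].
Proof.
case: s => [|x [|y [|q r]]] // /andP[Ps /eqP /= ya]; last first.
  by exists q, r; case/and4P: Ps => _ /eqP /= <-; rewrite ya.
by move: (tpath_seq_last Ps) => /= /eqP; rewrite ya (negbTE (tv_neq_k a_tv)).
Qed.

Lemma P2_tpath_shape s : P2_tpath s -> exists q r, s = [:: b, q & r].
Proof. by case: s => [|x [|q r]] // /and4P[_ /eqP /= <-]; exists q, r. Qed.

Lemma restrict_tpathP s : P_tpath_via_a s -> P2_tpath (restrict_tpath s).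
Proof.
move=> Ps; have [q [r s_eq]] := P_tpath_shape Ps; subst s; case/andP: Ps => Ps _.
rewrite /restrict_tpath /=; case: eqP => [qb | /eqP qb]; last exact: tpath_swap_head.
subst q; case: r Ps => [|q r] Ps; last exact: tpath_drop_head.
by move: (tpath_seq_last Ps) => /= /eqP; rewrite (negbTE (tv_neq_k b_tv)).
Qed.

Lemma extend_tpathP s : P2_tpath s -> P_tpath_via_a (extend_tpath s).
Proof.
move=> Qs; have [q [r s_eq]] := P2_tpath_shape Qs; subst s.
rewrite /extend_tpath /=; case: eqP => [qa | /eqP qa]; rewrite [nth _ _ _]/= ?qa eqxx andbT.
  subst q; case: r Qs => [|q r] Qs; last exact: tpath_unswap_head.
  by move: (tpath_seq_last Qs) => /= /eqP; rewrite (negbTE (tv_neq_k a_tv)).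
exact: tpath_add_head.
Qed.

Lemma restrict_tpathK s : P_tpath_via_a s -> extend_tpath (restrict_tpath s) = s.
Proof.
move=> Ps; have [q [r s_eq]] := P_tpath_shape Ps; subst s; case/andP: Ps => Ps _.
rewrite /restrict_tpath /=; case: eqP => [qb | _]; last by rewrite /extend_tpath /= eqxx.
subst q; case: r Ps => [|q r] Ps.
  by move: (tpath_seq_last Ps) => /= /eqP; rewrite (negbTE (tv_neq_k b_tv)).
rewrite /extend_tpath /=; case: eqP => // qa; subst q.
case/and5P: Ps => _ _ _ _ /and4P[_ + _ _].
rewrite !steps_cons2 !map_cons (endpointsC b a) cons_uniq => /andP[_].
by rewrite cons_uniq in_cons eqxx.
Qed.

Lemma extend_tpathK s : P2_tpath s -> restrict_tpath (extend_tpath s) = s.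
Proof.
move=> Qs; have [q [r s_eq]] := P2_tpath_shape Qs; subst s.
rewrite /extend_tpath /=; case: eqP => [qa | _]; last by rewrite /restrict_tpath /= eqxx.
subst q; rewrite /restrict_tpath /=; have := b_notin_P2_tpath Qs.
case: r {Qs} => [|p r] /=; first by rewrite (negbTE (i_neq_V2 (tv_V2 b_tv))).
by case: eqP => // ->; rewrite !inE eqxx orbT.
Qed.

Lemma tweight_extend (R : unitRingType) (c : 'I_n -> 'I_n -> R) s :
  c b a \is a GRing.unit -> P2_tpath s ->
  tweight c (extend_tpath s) = (c i a * (c b a)^-1 * tweight c s)%R.
Proof.
move=> cba Qs; have [q [r s_eq]] := P2_tpath_shape Qs; subst s.
rewrite /extend_tpath /=; case: eqP => [qa | //]; subst q.
case: r Qs => [|p r] Qs; last by rewrite /= -!mulrA mulKr.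
by move: (tpath_seq_last Qs) => /= /eqP; rewrite (negbTE (tv_neq_k a_tv)).
Qed.

Lemma sum_tpaths_first_step (R : unitRingType) (c : 'I_n -> 'I_n -> R) :
  c b a \is a GRing.unit ->
  (\sum_(s <- short_seqs n (tpath_bound n) | P_tpath_via_a s) tweight c s =
   c i a * (c b a)^-1 *
     \sum_(s <- short_seqs n (tpath_bound n) | P2_tpath s) tweight c s)%R.
Proof.
move=> cba; rewrite mulr_sumr.
rewrite -(big_uniq_bij _ (P := fun s => P_tpath_via_a s) (Q := fun s => P2_tpath s)
  (f := restrict_tpath) (g := extend_tpath)) ?short_seqs_uniq //.
- by apply: eq_bigr => s Ps; rewrite -tweight_extend ?restrict_tpathK ?restrict_tpathP.
- by move=> s /andP[/tpath_seq_short].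
- exact: tpath_seq_short.
- exact: restrict_tpathP.
- exact: extend_tpathP.
- exact: restrict_tpathK.
- exact: extend_tpathK.
Qed.
End FirstStep.

Theorem lemma2p8 (R : unitRingType) (n : nat) (t v : 'I_n)
    (D2 : {set 'I_n * 'I_n}) (c : 'I_n -> 'I_n -> R) :
  (3 <= n)%N ->
  internal_diag [set: 'I_n] (t, v) ->
  dissection (V2 t v) D2 ->
  (forall rs, rs \in (t, v) |: ((v, t) |: D2) -> c rs.1 rs.2 \is a GRing.unit) ->
  (forall i k, i \in V2 t v -> k \in V2 t v -> i != k ->
     c i k = tsum (V2 t v) D2 c i k) ->
  weak_frieze c [set (t, v); (v, t)] ->
  forall i k, i \in U1 t v -> k \in U2 t v ->
    c i k = tsum [set: 'I_n] ((t, v) |: ((v, t) |: D2)) c i k.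
Proof.
move=> _ tv_diag D2_diss D_unit c_tpath [_ frieze] i k iU1 kU2.
have tv : t != v by case/and4P: tv_diag.
have c_tsum x : x \in [set t; v] -> c x k =
    (\sum_(s <- short_seqs n (tpath_bound n) | tpath_seq (V2 t v) D2 x k s) tweight c s)%R.
  move=> xtv; rewrite c_tpath; last 3 first.
  - exact: tv_V2.
  - exact: k_V2 kU2.
  - exact: tv_neq_k kU2 _ xtv.
  rewrite tsum_short_seqs.
  by apply: eq_bigl => s; rewrite is_tpathE.
have tvD : (t, v) \in (t, v) |: ((v, t) |: D2) by rewrite !in_setU1 eqxx.
have vtD : (v, t) \in (t, v) |: ((v, t) |: D2) by rewrite !in_setU1 eqxx orbT.
rewrite tsum_short_seqs (eq_bigl _ _ (is_tpathE _ _ _ _)).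
rewrite (big_tpath_second_vertex tv D2_diss iU1 kU2).
rewrite (sum_tpaths_first_step tv D2_diss iU1 kU2 (or_introl erefl) (D_unit _ vtD)).
rewrite (sum_tpaths_first_step tv D2_diss iU1 kU2 (or_intror erefl) (D_unit _ tvD)).
rewrite -!c_tsum ?inE ?eqxx ?orbT //.
have /andP[cross_tv _] := cross_U1_U2 iU1 kU2.
by apply: frieze; rewrite ?inE ?eqxx ?orbT.
Qed.
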